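(* Let $H\in\mathbb{R}^{n_z\times n_z}$ be symmetric positive definite, $F\in\mathbb{R}^{n_x\times n_z}$, $G\in\mathbb{R}^{n_c\times n_z}$, $S\in\mathbb{R}^{n_c\times n_x}$, $w\in\mathbb{R}^{n_c}$, and assume $\{z: Gz\le Sx+w\}\neq\emptyset$ for every $x\in\mathbb{R}^{n_x}$. Let $\kappa$ be a global Lipschitz constant of this mp-QP, let $\hat{x},x\in\mathbb{R}^{n_x}$, and define $$\mathbb{I}(x)=\mathbb{A}(\hat{x})\cup\big\{j\in\mathbb{A}^c(\hat{x}) : \mathcal{B}(z^*(\hat{x}),\kappa\|x-\hat{x}\|)\not\subseteq\mathcal{Z}_j(x)\big\}.$$ Then $z^*(x,\mathbb{I}(x))=z^*(x)$.
   Context: For a parameter $x$, mp-QP$(x)$ is: minimize $V(z)=\frac12 z^THz+x^TFz$ over $z\in\mathcal{Z}(x)=\{z\in\mathbb{R}^{n_z}: Gz\le Sx+w\}$. $G_j,S_j$ are the $j$-th rows of $G,S$, $w_j$ the $j$-th entry of $w$, and $\mathcal{Z}_j(x)=\{z: G_jz\le S_jx+w_j\}$. For $\mathbb{I}\subseteq\{1,\dots,n_c\}$, $\mathcal{Z}(x,\mathbb{I})=\bigcap_{j\in\mathbb{I}}\mathcal{Z}_j(x)$ ($=\mathbb{R}^{n_z}$ if $\mathbb{I}=\emptyset$) and $z^*(x,\mathbb{I})$ is the unique minimizer of $V$ over $\mathcal{Z}(x,\mathbb{I})$; $z^*(x)=z^*(x,\{1,\dots,n_c\})$. Active set $\mathbb{A}(x)=\{j: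 G_jz^*(x)=S_jx+w_j\}$, inactive set $\mathbb{A}^c(x)=\{j: G_jz^*(x)<S_jx+w_j\}$. A global Lipschitz constant (GLC) is a number $\kappa\in\mathbb{R}$ such that $\|z^*(x_1,\mathbb{I})-z^*(x_2,\mathbb{I})\|\le\kappa\|x_1-x_2\|$ for all $x_1,x_2\in\mathbb{R}^{n_x}$ and all $\mathbb{I}\subseteq\{1,\dots,n_c\}$. $\mathcal{B}(q,r)=\{v:\|v-q\|\le r\}$ (Euclidean norm). When $G_j\neq0$, the condition $\mathcal{B}(z^*(\hat x),\kappa\|x-\hat x\|)\not\subseteq\mathcal{Z}_j(x)$ is equivalent to $\kappa\|x-\hat{x}\|>\frac{w_j+S_jx-G_jz^*(\hat{x})}{\|G_j\|}$ (this is the set computed by the paper's Algorithm 1). *)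

From HB Require Import structures.
From mathcomp Require Import all_boot all_order all_algebra.
From mathcomp Require Import boolp reals.
Set Implicit Arguments. Unset Strict Implicit. Unset Printing Implicit Defensive.
Import Order.TTheory GRing.Theory Num.Theory.
Local Open Scope ring_scope.

Section MPQP.
Variables (R : realType) (nx nz nc : nat).
Variables (H : 'M[R]_nz) (F : 'M[R]_(nx, nz)) (G : 'M[R]_(nc, nz))
          (S : 'M[R]_(nc, nx)) (w : 'cV[R]_nc).

Definition enorm (n : nat) (v : 'cV[R]_n) : R := Num.sqrt (\sum_i (v i 0) ^+ 2).

Definition ball_in (n : nat) (q : 'cV[R]_n) (r : R) (v : 'cV[R]_n) : Prop :=
  enorm (v - q) <= r.

Definition cost (x : 'cV[R]_nx) (z : 'cV[R]_nz) : R :=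
  2^-1 * (z^T *m H *m z) 0 0 + (x^T *m F *m z) 0 0.

Definition Zj (x : 'cV[R]_nx) (j : 'I_nc) (z : 'cV[R]_nz) : Prop :=
  (G *m z) j 0 <= (S *m x) j 0 + w j 0.

Definition ZI (x : 'cV[R]_nx) (I : {set 'I_nc}) (z : 'cV[R]_nz) : Prop :=
  forall j, j \in I -> Zj x j z.

(* z is the (unique) minimizer of V over Z(x, I), i.e. z = z^*(x, I) *)
Definition is_zstar (x : 'cV[R]_nx) (I : {set 'I_nc}) (z : 'cV[R]_nz) : Prop :=
  ZI x I z /\ forall z', ZI x I z' -> cost x z <= cost x z'.

Definition GLC (kappa : R) : Prop :=
  forall (x1 x2 : 'cV[R]_nx) (I : {set 'I_nc}) (z1 z2 : 'cV[R]_nz),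
    is_zstar x1 I z1 -> is_zstar x2 I z2 ->
    enorm (z1 - z2) <= kappa * enorm (x1 - x2).

Definition active_set (xh : 'cV[R]_nx) (zh : 'cV[R]_nz) : {set 'I_nc} :=
  [set j | (G *m zh) j 0 == (S *m xh) j 0 + w j 0].
Definition inactive_set (xh : 'cV[R]_nx) (zh : 'cV[R]_nz) : {set 'I_nc} :=
  [set j | (G *m zh) j 0 < (S *m xh) j 0 + w j 0].

Definition Iset (kappa : R) (xh : 'cV[R]_nx) (zh : 'cV[R]_nz)
    (x : 'cV[R]_nx) : {set 'I_nc} :=
  active_set xh zh :|:
  [set j in inactive_set xh zh |
     `[< exists v, ball_in zh (kappa * enorm (x - xh)) v /\ ~ Zj x j v >]].

End MPQP.

(** The feasible set is convex and the cost is a convex quadratic, so a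
  feasible point that is optimal along every feasible direction is a global
  minimiser.  Near [z^*(xh)] the inactive constraints of [xh] are slack, hence
  [z^*(xh)] also minimises over any [Z(xh, I)] with [I] containing the active
  set, in particular over [Z(xh, I(x))].  The Lipschitz bound then puts
  [z^*(x, I(x))] in the ball of radius [kappa ||x - xh||] around [z^*(xh)],
  and by the choice of [I(x)] this ball lies in every [Z_j(x)] with [j] not
  in [I(x)]; so [z^*(x, I(x))] is feasible for the full problem, and strict
  convexity makes the minimiser unique. *)

From HB Require Import structures.
From mathcomp Require Import all_boot all_order all_algebra.
From mathcomp Require Import boolp reals.
From mathcomp Require Import lra ring.
Import Order.TTheory GRing.Theory Num.Theory.
Local Open Scope ring_scope.

Section MPQP.
Context {R : realType} {nx nz nc : nat}.
Context {H : 'M[R]_nz} {F : 'M[R]_(nx, nz)} {G : 'M[R]_(nc, nz)}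
        {S : 'M[R]_(nc, nx)} {w : 'cV[R]_nc}.

Definition qform (A : 'M[R]_nz) (v : 'cV[R]_nz) : R := (v^T *m A *m v) 0 0.

Lemma Zj_segment x j (a d : 'cV[R]_nz) (t : R) :
  0 <= t <= 1 -> Zj G S w x j a -> Zj G S w x j (a + d) ->
  Zj G S w x j (a + t *: d).
Proof.
rewrite /Zj !mulmxDr -scalemxAr !mxE => /andP[t0 t1] Ha Had; nra.
Qed.

Lemma ZI_segment x I (a d : 'cV[R]_nz) (t : R) :
  0 <= t <= 1 -> ZI G S w x I a -> ZI G S w x I (a + d) ->
  ZI G S w x I (a + t *: d).
Proof.
by move=> t01 Ha Had j jI; apply: Zj_segment; [|exact: Ha|exact: Had].
Qed.

Lemma zstar_restrict {x} {I J : {set 'I_nc}} {z} :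
  I \subset J -> is_zstar H F G S w x I z -> ZI G S w x J z ->
  is_zstar H F G S w x J z.
Proof.
move=> /subsetP IJ [_ z_min] zJ; split=> // z' z'J.
by apply: z_min => j /IJ; exact: z'J.
Qed.

(* The step length [(1 + T)^-1] keeps every inactive constraint satisfied,
   since [T] bounds the ratio of the change [(G d)_j] to the slack [s_j]. *)
Lemma feasible_step xh zh (I : {set 'I_nc}) z' :
  ZI G S w xh setT zh -> active_set G S w xh zh \subset I ->
  ZI G S w xh I z' ->
  exists2 t, 0 < t <= 1 & ZI G S w xh setT (zh + t *: (z' - zh)).
Proof.
move=> zh_feas /subsetP activeI z'I.
set d := z' - zh.
set s := fun j => (S *m xh) j 0 + w j 0 - (G *m zh) j 0.
set T := \sum_(j in inactive_set G S w xh zh) `|(G *m d) j 0| / s j.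
have s_gt0 j : j \in inactive_set G S w xh zh -> 0 < s j.
  by rewrite inE /s subr_gt0.
have ratio_ge0 j : j \in inactive_set G S w xh zh -> 0 <= `|(G *m d) j 0| / s j.
  by move=> /s_gt0 sj; rewrite divr_ge0 // ltW.
have T_ge0 : 0 <= T by apply: sumr_ge0.
exists (1 + T)^-1; first by rewrite invr_gt0 invf_le1; lra.
move=> j _; have := zh_feas j (in_setT j).
rewrite /Zj le_eqVlt => /orP[/eqP act | inact].
  apply: Zj_segment; first by rewrite invr_ge0 invf_le1; lra.
    by rewrite /Zj act.
  by rewrite /d addrC subrK; apply: z'I; apply: activeI; rewrite inE act.
have j_inact : j \in inactive_set G S w xh zh by rewrite inE.
have sj := s_gt0 j j_inact.
have ratio_le : `|(G *m d) j 0| / s j <= T.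
  by rewrite /T (bigD1 j) //= lerDl; apply: sumr_ge0 => i /andP[/ratio_ge0].
have change_le : (G *m d) j 0 <= T * s j.
  by apply: le_trans (ler_norm _) _; rewrite -ler_pdivrMr.
rewrite mulmxDr -scalemxAr mxE [X in _ + X]mxE.
rewrite -lerBrDl -/(s j) -(ler_pM2l (_ : 0 < 1 + T)) ?mulrA ?mulfV; lra.
Qed.

Lemma feasible_of_Iset {kappa xh zh x z} :
  ZI G S w xh setT zh -> ball_in zh (kappa * enorm (x - xh)) z ->
  ZI G S w x (Iset G S w kappa xh zh x) z -> ZI G S w x setT z.
Proof.
move=> zh_feas z_ball zI j _.
case: (boolP (j \in Iset G S w kappa xh zh x)) => [/zI // | ].
rewrite !inE negb_or => /andP[not_act not_cut].
have j_inact : (G *m zh) j 0 < (S *m xh) j 0 + w j 0.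
  by rewrite lt_neqAle not_act; exact: zh_feas j (in_setT j).
rewrite j_inact /= in not_cut.
by apply: contrapT => z_out; move/asboolP: not_cut; apply; exists z.
Qed.

Hypothesis H_sym : H^T = H.

Lemma quad_sym (a b : 'cV[R]_nz) : a^T *m H *m b = b^T *m H *m a.
Proof.
rewrite [LHS]mx11_scalar -tr_scalar_mx -mx11_scalar.
by rewrite !trmx_mul trmxK H_sym mulmxA.
Qed.

Lemma cost_along x (a d : 'cV[R]_nz) (t : R) :
  cost H F x (a + t *: d) = cost H F x a +
    t * ((d^T *m H *m a) 0 0 + (x^T *m F *m d) 0 0) + t ^+ 2 / 2 * qform H d.
Proof.
rewrite /cost /qform.
have -> : (a + t *: d)^T = a^T + t *: d^T by rewrite linearD /= linearZ.
rewrite !mulmxDl !mulmxDr -!scalemxAl -!scalemxAr (quad_sym a d).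
(* Naming the 1x1 products keeps [mxE] from unfolding them. *)
set Haa := a^T *m H *m a; set Hda := d^T *m H *m a; set Hdd := d^T *m H *m d.
set Fa := x^T *m F *m a; set Fd := x^T *m F *m d.
by rewrite !mxE; field.
Qed.

Lemma cost_segment x (a d : 'cV[R]_nz) (t : R) :
  cost H F x (a + t *: d) =
    (1 - t) * cost H F x a + t * cost H F x (a + d)
    - t * (1 - t) / 2 * qform H d.
Proof.
have -> : a + d = a + 1 *: d by rewrite scale1r.
by rewrite !cost_along expr1n; ring.
Qed.

Section Convex.
Hypothesis H_psd : forall d, 0 <= qform H d.

Lemma cost_convex x (a d : 'cV[R]_nz) (t : R) : 0 <= t <= 1 ->
  cost H F x (a + t *: d) <= (1 - t) * cost H F x a + t * cost H F x (a + d).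
Proof.
move=> /andP[t0 t1]; rewrite cost_segment lerBlDr lerDl.
by rewrite !mulr_ge0 ?subr_ge0 ?invr_ge0 ?H_psd.
Qed.

(* By convexity,
   [cost z <= cost (z + t (z' - z)) <= (1 - t) cost z + t cost z']. *)
Lemma zstar_of_directions {x} {I J : {set 'I_nc}} {z} :
  is_zstar H F G S w x J z -> ZI G S w x I z ->
  (forall z', ZI G S w x I z' ->
     exists2 t, 0 < t <= 1 & ZI G S w x J (z + t *: (z' - z))) ->
  is_zstar H F G S w x I z.
Proof.
move=> [_ z_min] zI step; split=> // z' z'I.
have [t /andP[t0 t1] zt_feas] := step z' z'I.
have t01 : 0 <= t <= 1 by rewrite t1 ltW.
have := le_trans (z_min _ zt_feas) (cost_convex x z (z' - z) t t01).
rewrite [z + (z' - z)]addrC subrK => le_cost.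
by rewrite -(ler_pM2l t0); lra.
Qed.

Lemma zstar_relax {xh zh} {I : {set 'I_nc}} :
  is_zstar H F G S w xh setT zh -> active_set G S w xh zh \subset I ->
  is_zstar H F G S w xh I zh.
Proof.
move=> zh_opt activeI; apply: (zstar_of_directions zh_opt).
  by move=> j _; exact: zh_opt.1.
by move=> z'; apply: feasible_step => //; exact: zh_opt.1.
Qed.

End Convex.

Section StrictlyConvex.
Hypothesis H_pd : forall z, z != 0 -> 0 < qform H z.

Lemma qform_ge0 d : 0 <= qform H d.
Proof.
have [->|/H_pd/ltW //] := eqVneq d 0.
by rewrite /qform mulmx0 mxE.
Qed.

Lemma zstar_unique {x I} {z1 z2 : 'cV[R]_nz} :
  is_zstar H F G S w x I z1 -> is_zstar H F G S w x I z2 -> z1 = z2.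
Proof.
move=> [z1_feas z1_min] [z2_feas z2_min].
apply/eqP; rewrite -subr_eq0; apply/negP => /negP/H_pd q_gt0.
have z1E : z2 + (z1 - z2) = z1 by rewrite addrC subrK.
have mid_feas : ZI G S w x I (z2 + 2^-1 *: (z1 - z2)).
  by apply: ZI_segment; rewrite ?z1E //; apply/andP; split; lra.
have := z2_min _ mid_feas; rewrite cost_segment z1E.
have := z1_min _ z2_feas; have := z2_min _ z1_feas; lra.
Qed.

End StrictlyConvex.

End MPQP.

Theorem theorem1 (R : realType) (nx nz nc : nat)
  (H : 'M[R]_nz) (F : 'M[R]_(nx, nz)) (G : 'M[R]_(nc, nz))
  (S : 'M[R]_(nc, nx)) (w : 'cV[R]_nc) :
  H^T = H ->
  (forall z : 'cV[R]_nz, z != 0 -> 0 < (z^T *m H *m z) 0 0) ->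
  (forall x : 'cV[R]_nx, exists z : 'cV[R]_nz, ZI G S w x setT z) ->
  forall (kappa : R), GLC H F G S w kappa ->
  forall (xh x : 'cV[R]_nx) (zh : 'cV[R]_nz),
    is_zstar H F G S w xh setT zh ->
  forall z1 z2 : 'cV[R]_nz,
    is_zstar H F G S w x (Iset G S w kappa xh zh x) z1 ->
    is_zstar H F G S w x setT z2 ->
    z1 = z2.
Proof.
(* Nonemptiness of [Z(x)] only matters for the existence of [z1] and [z2]. *)
move=> H_sym H_pd _ kappa kappa_glc xh x zh zh_opt z1 z2 z1_opt z2_opt.
set I := Iset G S w kappa xh zh x.
have zh_optI : is_zstar H F G S w xh I zh.
  by apply: (zstar_relax H_sym (qform_ge0 H_pd) zh_opt); apply: subsetUl.
have z1_ball := kappa_glc x xh I z1 zh z1_opt zh_optI.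
have z1_feas := feasible_of_Iset zh_opt.1 z1_ball z1_opt.1.
have z1_optT := zstar_restrict (subsetT I) z1_opt z1_feas.
exact: (zstar_unique H_sym H_pd z1_optT z2_opt).
Qed.
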